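(* For every right-most path $\gamma$ in the triangular lattice $\mathbb{T}$, $$\frac{|\gamma|-1}{6}\le|\partial^+\gamma|\le 5|\gamma|.$$
   Context: $\mathbb{T}$ is the triangular lattice in $\mathbb{C}$ (vertices $\{x+ye^{\pi i/3}:x,y\in\mathbb{Z}\}$, edges between vertices at Euclidean distance $1$). A path $\gamma=(v_0,\dots,v_n)$ has $v_{i-1},v_i$ adjacent; its length is $|\gamma|=n$. Each edge gives two oriented edges $\langle u,v\rangle,\langle v,u\rangle$ (head of $\langle u,v\rangle$ is $v$). $\gamma$ is simple if it traverses each oriented edge at most once; if $v_0=v_n$ it is a circuit and indices are mod $n$. When $v_{i-1},v_{i+1}$ are defined, the right-boundary edges at $v_i$ are the oriented edges out of $v_i$ listed counterclockwise strictly after $\langle v_i,v_{i-1}\rangle$ and strictly before $\langle v_i,v_{i+1}\rangle$ (otherwise none); their heads are the right-boundary vertices of $v_i$; $\partial^+\gamma$ is the set of all right-boundary vertices of all $v_i$. $\gamma$ is right-most if it is simple, uses no vertex of $\partial^+\gamma$, and each $v_i$ with $v_{i-1},v_{i+1}$ defined has at least one right-boundary vertex. *)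

From mathcomp Require Import all_boot all_order all_algebra.
Set Implicit Arguments. Unset Strict Implicit. Unset Printing Implicit Defensive.
Import GRing.Theory Num.Theory.

(* Vertices of the triangular lattice: (x, y) : int * int stands for
   x + y * e^{i pi/3} in C. *)
Definition vtx := (int * int)%type.

Definition vadd (u w : vtx) : vtx := ((u.1 + w.1)%R, (u.2 + w.2)%R).

(* The six unit directions, listed counterclockwise starting at angle 0:
   1, w, w^2 = w - 1, -1, -w, 1 - w   (w = e^{i pi/3}). *)
Definition dvec (k : nat) : vtx :=
  match k %% 6 with
  | 0 => (1%R, 0%R)
  | 1 => (0%R, 1%R)
  | 2 => ((-1)%R, 1%R)
  | 3 => ((-1)%R, 0%R)
  | 4 => (0%R, (-1)%R)
  | _ => (1%R, (-1)%R)
  end.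

Definition adj (u v : vtx) : bool := has (fun k => v == vadd u (dvec k)) (iota 0 6).

Definition dir_of (u v : vtx) : nat := find (fun k => v == vadd u (dvec k)) (iota 0 6).

Definition is_path (p : seq vtx) : bool :=
  (0 < size p) && path adj (head (0%R, 0%R) p) (behead p).

Definition plen (p : seq vtx) : nat := (size p).-1.

Definition vat (p : seq vtx) (i : nat) : vtx := nth (0%R, 0%R) p i.

(* circuit: v_0 = v_n with n >= 1; indices are then taken mod n. *)
Definition is_circuit (p : seq vtx) : bool :=
  (0 < plen p) && (vat p 0 == vat p (plen p)).

(* Indices i for which v_{i-1}, v_{i+1} are defined. *)
Definition inner_idx (p : seq vtx) : seq nat :=
  if is_circuit p then iota 0 (plen p) else iota 1 (plen p).-1.

Definition vprev (p : seq vtx) (i : nat) : vtx :=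
  if is_circuit p then vat p ((i + plen p).-1 %% plen p) else vat p i.-1.

Definition vnext (p : seq vtx) (i : nat) : vtx :=
  if is_circuit p then vat p (i.+1 %% plen p) else vat p i.+1.

(* Number of counterclockwise steps (in 1..6) from <v_i,v_{i-1}> to
   <v_i,v_{i+1}>; 6 means the two oriented edges coincide (full turn). *)
Definition turn (p : seq vtx) (i : nat) : nat :=
  let din := dir_of (vat p i) (vprev p i) in
  let dout := dir_of (vat p i) (vnext p i) in
  ((dout + 6 - din + 5) %% 6).+1.

(* Right-boundary vertices of v_i: heads of the oriented edges out of v_i
   strictly after <v_i,v_{i-1}> and strictly before <v_i,v_{i+1}> ccw. *)
Definition rb_vertices (p : seq vtx) (i : nat) : seq vtx :=
  [seq vadd (vat p i) (dvec (dir_of (vat p i) (vprev p i) + k))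
     | k <- iota 1 (turn p i).-1].

Definition rboundary (p : seq vtx) : seq vtx :=
  undup (flatten [seq rb_vertices p i | i <- inner_idx p]).

Definition is_simple (p : seq vtx) : bool :=
  uniq [seq (vat p i, vat p i.+1) | i <- iota 0 (plen p)].

Definition rightmost (p : seq vtx) : bool :=
  [&& is_path p, is_simple p,
      all (fun w => w \notin p) (rboundary p)
    & all (fun i => 0 < size (rb_vertices p i)) (inner_idx p)].

From mathcomp Require Import all_boot all_order all_algebra.
From mathcomp Require Import zify.

(* Upper bound: each interior vertex has at most five right-boundary vertices.
   Lower bound: every interior vertex v_i (0 < i < |g|) has a first
   right-boundary vertex w; the pair (w, direction of <v_i, v_(i-1)>) recovers
   v_i and then v_(i-1), hence the oriented edge <v_(i-1), v_i>, hence i by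
   simplicity.  So i |-> (w, direction) injects |g| - 1 indices into
   d+g x {0, ..., 5}. *)

Lemma size_rb_vertices p i : size (rb_vertices p i) <= 5.
Proof. by rewrite size_map size_iota /turn -ltnS ltn_pmod. Qed.

Lemma size_inner_idx p : size (inner_idx p) <= plen p.
Proof. by rewrite /inner_idx; case: ifP => _; rewrite size_iota // leq_pred. Qed.

Lemma size_rboundary_le_5_plen p : size (rboundary p) <= 5 * plen p.
Proof.
rewrite (leq_trans (size_undup _)) // size_flatten /shape sumnE !big_map.
apply: (@leq_trans (\sum_(i <- inner_idx p) 5)).
  by apply: leq_sum => i _; apply: size_rb_vertices.
by rewrite big_const_seq count_predT iter_addn_0 leq_mul2l size_inner_idx.
Qed.

Lemma adj_sym u v : adj u v -> adj v u.
Proof.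
case: u => a b; case/hasP => k; rewrite mem_iota => /andP[_ hk] /eqP ->.
apply/hasP.
case: k hk => [|[|[|[|[|[|k]]]]]] // _;
  [exists 3 | exists 4 | exists 5 | exists 0 | exists 1 | exists 2] => //;
  rewrite /vadd /dvec /=; apply/eqP; congr pair; lia.
Qed.

Lemma dir_of_lt6 {u v} : adj u v -> dir_of u v < 6.
Proof. by rewrite /dir_of -[6]/(size (iota 0 6)) -has_find. Qed.

Lemma vadd_dir_of {u v} : adj u v -> vadd u (dvec (dir_of u v)) = v.
Proof.
move=> uv; have := nth_find 0 uv.
by rewrite nth_iota ?dir_of_lt6 // add0n => /eqP.
Qed.

Lemma vaddIr c : injective (vadd^~ c).
Proof.
case: c => c1 c2 [a1 a2] [b1 b2]; rewrite /vadd /= => -[e1 e2].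
by congr pair; lia.
Qed.

Lemma size_path p : is_path p -> size p = (plen p).+1.
Proof. by case/andP => p_gt0 _; rewrite prednK. Qed.

Lemma is_path_adj p i : is_path p -> 0 < i < size p -> adj (vat p i.-1) (vat p i).
Proof.
case: p => [|x s] // /andP[_ /= /(pathP (0, 0)%R) xs].
by case: i => [|i] //= i_lt; apply: xs.
Qed.

Lemma vprev_inner p i : 0 < i < plen p -> vprev p i = vat p i.-1.
Proof.
case/andP => i_gt0 i_lt; rewrite /vprev; case: ifP => // _.
by rewrite -(prednK i_gt0) addSn /= modnDr modn_small // prednK // ltnW.
Qed.

Lemma mem_inner_idx {p i} : 0 < i < plen p -> i \in inner_idx p.
Proof.
by case/andP => i_gt0 i_lt; rewrite /inner_idx; case: ifP => _; rewrite mem_iota; lia.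
Qed.

Lemma is_simple_inj p i j : is_simple p -> i < plen p -> j < plen p ->
  vat p i = vat p j -> vat p i.+1 = vat p j.+1 -> i = j.
Proof.
move=> /nth_uniq simple i_lt j_lt ei ei1; apply/eqP.
have := simple ((0, 0), (0, 0))%R i j.
rewrite size_map size_iota !(nth_map 0) ?size_iota // !nth_iota // !add0n.
by rewrite ei ei1 eqxx => /(_ i_lt j_lt) <-.
Qed.

Definition back_dir (p : seq vtx) (i : nat) : nat := dir_of (vat p i) (vat p i.-1).

Definition first_rb (p : seq vtx) (i : nat) : vtx :=
  vadd (vat p i) (dvec (back_dir p i).+1).

Section LowerBound.

Variable p : seq vtx.
Hypotheses (p_path : is_path p) (p_simple : is_simple p).
Hypothesis p_turns : all (fun i => 0 < size (rb_vertices p i)) (inner_idx p).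

Lemma adj_vat_pred {i} : 0 < i < plen p -> adj (vat p i) (vat p i.-1).
Proof. by move=> i_in; apply/adj_sym/is_path_adj; rewrite ?size_path //; lia. Qed.

Lemma first_rb_in_rboundary {i} : 0 < i < plen p -> first_rb p i \in rboundary p.
Proof.
move=> i_in; have i_inner := mem_inner_idx i_in.
rewrite mem_undup; apply/flatten_mapP; exists i => //.
have := allP p_turns i i_inner; rewrite size_map size_iota => turn_gt1.
apply/mapP; exists 1; first by rewrite mem_iota; lia.
by rewrite vprev_inner // addn1.
Qed.

Lemma first_rb_inj {i j} : 0 < i < plen p -> 0 < j < plen p ->
  first_rb p i = first_rb p j -> back_dir p i = back_dir p j -> i = j.
Proof.
move=> i_in j_in e_rb e_dir.
have e_v : vat p i = vat p j by apply: (vaddIr (dvec (back_dir p i).+1)); rewrite {2}e_dir.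
have e_prev : vat p i.-1 = vat p j.-1.
  rewrite -(vadd_dir_of (adj_vat_pred i_in)) -(vadd_dir_of (adj_vat_pred j_in)).
  by rewrite -/(back_dir p i) -/(back_dir p j) e_dir e_v.
suff : i.-1 = j.-1 by lia.
by apply: (is_simple_inj _ _ _ p_simple); try lia; rewrite ?prednK //; lia.
Qed.

Lemma plen_pred_le_6_size_rboundary : (plen p).-1 <= 6 * size (rboundary p).
Proof.
pose I := iota 1 (plen p).-1.
have I_in i : i \in I -> 0 < i < plen p by rewrite mem_iota; lia.
pose code i := (first_rb p i, back_dir p i).
have code_uniq : uniq (map code I).
  rewrite map_inj_in_uniq ?iota_uniq // => i j /I_in i_in /I_in j_in e.
  exact: first_rb_inj i_in j_in (congr1 fst e) (congr1 snd e).
rewrite mulnC -(size_iota 0 6) -(size_allpairs pair) -(size_iota 1 (plen p).-1).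
rewrite -(size_map code).
apply: uniq_leq_size => // _ /mapP[i /I_in i_in ->].
by rewrite allpairs_f ?first_rb_in_rboundary // mem_iota dir_of_lt6 // adj_vat_pred.
Qed.

End LowerBound.

Theorem lemma2p3 (p : seq vtx) :
  rightmost p ->
  (plen p).-1 <= 6 * size (rboundary p) /\ size (rboundary p) <= 5 * plen p.
Proof.
case/and4P => p_path p_simple _ p_turns; split.
  exact: plen_pred_le_6_size_rboundary.
exact: size_rboundary_le_5_plen.
Qed.
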